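(* Let $(V,\langle\cdot\,,\cdot\rangle_V)$ be a nonzero neutral scalar product space, let $P$ be an isometric involution of $V$, and assume there are two anti-isometries $T_1,T_2\colon V\to V$ such that $T_1P=-PT_1$ and $T_2P=PT_2$. Then the eigenspaces $E_+=\{v:Pv=v\}$ and $E_-=\{v:Pv=-v\}$ of $P$ are non-trivial, and the restriction of $\langle\cdot\,,\cdot\rangle_V$ to each of $E_\pm$ is non-degenerate and neutral.
   Context: A scalar product is a real symmetric non-degenerate bilinear form on a finite-dimensional real vector space; it is neutral if the maximal dimensions of subspaces on which it is positive definite, respectively negative definite, coincide. An involution is a linear $P$ with $P^2=\mathrm{Id}_V$. A bijective linear map $T$ is an isometry if $\langle Tv,Tv\rangle_V=\langle v,v\rangle_V$ for all $v$, and an anti-isometry if $\langle Tv,Tv\rangle_V=-\langle v,v\rangle_V$ for all $v$. *)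

From HB Require Import structures.
From mathcomp Require Import all_boot all_order all_algebra.
From mathcomp Require Import reals.
Set Implicit Arguments. Unset Strict Implicit. Unset Printing Implicit Defensive.
Import Order.TTheory GRing.Theory Num.Theory.
Local Open Scope ring_scope.

Section ScalarProducts.
Variables (R : realType) (V : vectType R).
Implicit Types (b : V -> V -> R) (U W : {vspace V}).

Definition bilinear_form b :=
  (forall a u v w, b u (a *: v + w) = a * b u v + b u w) /\
  (forall a u v w, b (a *: u + v) w = a * b u w + b v w).

Definition symmetric_form b := forall u v, b u v = b v u.

Definition nondegenerate_on b U :=
  forall u, u \in U -> (forall v, v \in U -> b u v = 0) -> u = 0.

Definition nondegenerate b := nondegenerate_on b fullv.

Definition posdef_on b W := forall v, v \in W -> v != 0 -> 0 < b v v.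
Definition negdef_on b W := forall v, v \in W -> v != 0 -> b v v < 0.

Definition neutral_on b U :=
  exists k : nat,
    [/\ (exists2 W, (W <= U)%VS & posdef_on b W /\ \dim W = k),
        (forall W, (W <= U)%VS -> posdef_on b W -> (\dim W <= k)%N),
        (exists2 W, (W <= U)%VS & negdef_on b W /\ \dim W = k) &
        (forall W, (W <= U)%VS -> negdef_on b W -> (\dim W <= k)%N)].

Definition neutral b := neutral_on b fullv.

Definition scalar_product b :=
  [/\ bilinear_form b, symmetric_form b & nondegenerate b].

Definition lin_involution (P : 'End(V)) := forall v, P (P v) = v.

Definition sp_isometry b (T : 'End(V)) :=
  bijective T /\ forall v, b (T v) (T v) = b v v.

Definition sp_anti_isometry b (T : 'End(V)) :=
  bijective T /\ forall v, b (T v) (T v) = - b v v.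

End ScalarProducts.

(** Since [P] is an isometry, its eigenspaces [E_a] and [E_c] are orthogonal
    whenever [a * c <> 1]; in particular [V] is the orthogonal direct sum of
    [E_+] and [E_-], so [b] stays non-degenerate on each summand.  The
    anti-isometry [T1] anticommutes with [P], hence exchanges [E_+] and
    [E_-]: neither can vanish without the other, and then [V = 0].  The
    anti-isometry [T2] commutes with [P], hence preserves each [E_±], and an
    injective anti-isometry of a subspace maps positive definite subspaces to
    negative definite ones of the same dimension and vice versa, so the two
    maximal dimensions agree. *)
From Pilot Require Import Defs.
From HB Require Import structures.
From mathcomp Require Import all_boot all_order all_algebra.
From mathcomp Require Import reals.
From mathcomp Require Import lra.
From Stdlib Require Import ClassicalDescription.
Import Order.TTheory GRing.Theory Num.Theory.
Local Open Scope ring_scope.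

Section Forms.
Context {R : realType} {V : vectType R} {b : V -> V -> R}.
Hypothesis b_bilinear : bilinear_form b.

Lemma formDr u v w : b u (v + w) = b u v + b u w.
Proof. by case: b_bilinear => linr _; rewrite -[v in LHS]scale1r linr mul1r. Qed.

Lemma form0r u : b u 0 = 0.
Proof. by have := formDr u 0 0; rewrite addr0 => /eqP; lra. Qed.

Lemma formZr a u v : b u (a *: v) = a * b u v.
Proof. by case: b_bilinear => linr _; rewrite -[a *: v]addr0 linr form0r addr0. Qed.

Lemma form0l v : b 0 v = 0.
Proof.
case: b_bilinear => _ linl; have := linl 1 0 0 v.
by rewrite scale1r addr0 mul1r => /eqP; lra.
Qed.

Lemma formZl a u v : b (a *: u) v = a * b u v.
Proof. by case: b_bilinear => _ linl; rewrite -[a *: u]addr0 linl form0l addr0. Qed.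

Lemma isometry_form (f : 'End(V)) :
  Defs.symmetric_form b -> (forall v, b (f v) (f v) = b v v) ->
  forall u v, b (f u) (f v) = b u v.
Proof.
move=> bC fq u v.
have quadD x y : b (x + y) (x + y) = b x x + b y y + 2 * b x y.
  by rewrite !formDr (bC (x + y) x) (bC (x + y) y) !formDr (bC y x); lra.
by have := fq (u + v); rewrite raddfD /= !quadD !fq; lra.
Qed.

Lemma nondegenerate_on_orthogonal_summand (U W : {vspace V}) :
  Defs.nondegenerate b -> (U + W)%VS = fullv ->
  (forall u w, u \in U -> w \in W -> b u w = 0) -> nondegenerate_on b U.
Proof.
move=> bnd UW_full UW_orth u uU uUperp; apply: bnd => [|x _]; first exact: memvf.
have /memv_addP[y yU [z zW ->]] : x \in (U + W)%VS by rewrite UW_full memvf.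
by rewrite formDr uUperp // UW_orth // addr0.
Qed.

End Forms.

Lemma ex_max_nat (Q : nat -> Prop) (N : nat) :
  Q 0%N -> (forall m, Q m -> (m <= N)%N) ->
  exists2 n, Q n & forall m, Q m -> (m <= n)%N.
Proof.
move=> Q0 QN.
pose q n := if excluded_middle_informative (Q n) then true else false.
have qP n : q n <-> Q n by rewrite /q; case: excluded_middle_informative.
have exq : exists n, q n by exists 0%N; apply/qP.
have ubq m : q m -> (m <= N)%N by move/qP; apply: QN.
case: (ex_maxnP exq ubq) => n /qP Qn maxn.
by exists n => // m /qP; apply: maxn.
Qed.

Section AntiIsometries.
Context {R : realType} {V : vectType R} {b : V -> V -> R}.

Lemma negdef_on_limg (f : 'End(V)) (W : {vspace V}) :
  (forall v, b (f v) (f v) = - b v v) -> posdef_on b W -> negdef_on b (f @: W).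
Proof.
move=> fq Wpos _ /memv_imgP[w wW ->] fw_neq0.
rewrite fq oppr_lt0 Wpos //.
by apply: contraNneq fw_neq0 => ->; rewrite linear0.
Qed.

Lemma posdef_on_limg (f : 'End(V)) (W : {vspace V}) :
  (forall v, b (f v) (f v) = - b v v) -> negdef_on b W -> posdef_on b (f @: W).
Proof.
move=> fq Wneg _ /memv_imgP[w wW ->] fw_neq0.
rewrite fq oppr_gt0 Wneg //.
by apply: contraNneq fw_neq0 => ->; rewrite linear0.
Qed.

Lemma neutral_on_anti_isometry (f : 'End(V)) (U : {vspace V}) :
  injective f -> (forall v, v \in U -> f v \in U) ->
  (forall v, b (f v) (f v) = - b v v) -> neutral_on b U.
Proof.
move=> f_inj fU fq.
have dim_img W : \dim (f @: W) = \dim W.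
  by apply: limg_dim_eq; rewrite (eqP (introT lker0P f_inj)) capv0.
have img_sub W : (W <= U)%VS -> (f @: W <= U)%VS.
  by move=> WU; apply/subvP => _ /memv_imgP[w wW ->]; apply/fU/(subvP WU).
pose Q (n : nat) := exists2 W, (W <= U)%VS & posdef_on b W /\ \dim W = n.
have Q0 : Q 0%N.
  by exists 0%VS; rewrite ?sub0v ?dimv0 //; split=> // v; rewrite memv0 => ->.
have QU m : Q m -> (m <= \dim U)%N by case=> W WU [_ <-]; apply: dimvS.
have [k [W WU [Wpos dimW]] kmax] := ex_max_nat _ _ Q0 QU.
exists k; split.
- by exists W.
- by move=> W' W'U W'pos; apply: kmax; exists W'.
- by exists (f @: W)%VS; rewrite ?img_sub // dim_img; split=> //; apply: negdef_on_limg.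
- move=> W' W'U W'neg; rewrite -dim_img; apply: kmax.
  by exists (f @: W')%VS; rewrite ?img_sub //; split=> //; apply: posdef_on_limg.
Qed.

End AntiIsometries.

Section Eigenspaces.
Context {R : realType} {V : vectType R}.
Local Notation E := (@passmx.leigenspace R V).

Lemma mem_leigenspace (P : 'End(V)) a v : (v \in E P a) = (P v == a *: v).
Proof. by rewrite memv_ker add_lfunE opp_lfunE scale_lfunE id_lfunE subr_eq0. Qed.

Lemma leigenspace_orthogonal (b : V -> V -> R) (P : 'End(V)) a c u w :
  bilinear_form b -> (forall u w, b (P u) (P w) = b u w) -> a * c != 1 ->
  u \in E P a -> w \in E P c -> b u w = 0.
Proof.
move=> bbil Pb ac_neq1; rewrite !mem_leigenspace => /eqP Pu /eqP Pw.
have : b u w = a * c * b u w by rewrite -{1}Pb Pu Pw formZl // formZr // mulrA.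
move/eqP; rewrite -subr_eq0 -{1}[b u w]mul1r -mulrBl mulf_eq0 subr_eq0 eq_sym.
by rewrite (negbTE ac_neq1) => /eqP.
Qed.

Lemma involution_leigenspace_sum (P : 'End(V)) :
  lin_involution P -> (E P 1 + E P (-1))%VS = fullv.
Proof.
move=> PP; apply/eqP; rewrite eqEsubv subvf /=; apply/subvP => v _.
have -> : v = 2^-1 *: (v + P v) + 2^-1 *: (v - P v).
  rewrite -scalerDr addrACA subrr addr0 -mulr2n -scaler_nat scalerA.
  by rewrite mulVf ?scale1r // pnatr_eq0.
apply: memv_add; rewrite mem_leigenspace linearZ /= ?raddfB ?raddfD /= PP.
- by rewrite !scale1r addrC.
- by rewrite !scaleN1r opprK addrC.
Qed.

Lemma anticommute_leigenspace (P T : 'End(V)) a v :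
  (forall v, T (P v) = - P (T v)) -> v \in E P a -> T v \in E P (- a).
Proof.
move=> TP; rewrite !mem_leigenspace => /eqP Pv.
by rewrite -[P (T v)]opprK -TP Pv linearZ /= scaleNr.
Qed.

Lemma commute_leigenspace (P T : 'End(V)) a v :
  (forall v, T (P v) = P (T v)) -> v \in E P a -> T v \in E P a.
Proof. by move=> TP; rewrite !mem_leigenspace => /eqP Pv; rewrite -TP Pv linearZ. Qed.

Lemma leigenspace_neq0 (P T : 'End(V)) a :
  fullv != 0%VS :> {vspace V} -> (E P a + E P (- a))%VS = fullv -> injective T ->
  (forall v, T (P v) = - P (T v)) -> E P a != 0%VS.
Proof.
move=> full_neq0 sum_full T_inj TP; apply: contraNneq full_neq0 => Ea0.
suff Ena0 : E P (- a) = 0%VS by rewrite -sum_full Ea0 Ena0 addv0.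
apply/eqP; rewrite -subv0; apply/subvP => v vEna; rewrite memv0.
have : T v \in E P a by rewrite -[a]opprK anticommute_leigenspace.
by rewrite Ea0 memv0 => /eqP Tv0; apply/eqP/T_inj; rewrite Tv0 linear0.
Qed.

End Eigenspaces.

Theorem lemma2p14 (R : realType) (V : vectType R) (b : V -> V -> R)
  (P T1 T2 : 'End(V)) :
  scalar_product b -> neutral b -> fullv != (0 : {vspace V})%VS ->
  lin_involution P -> sp_isometry b P ->
  sp_anti_isometry b T1 -> sp_anti_isometry b T2 ->
  (forall v, T1 (P v) = - P (T1 v)) ->
  (forall v, T2 (P v) = P (T2 v)) ->
  [/\ passmx.leigenspace P 1 != 0%VS, nondegenerate_on b (passmx.leigenspace P 1)
      & neutral_on b (passmx.leigenspace P 1)] /\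
  [/\ passmx.leigenspace P (-1) != 0%VS, nondegenerate_on b (passmx.leigenspace P (-1))
      & neutral_on b (passmx.leigenspace P (-1))].
Proof.
move=> [bbil bC bnd] _ full_neq0 PP [_ Pq] [/bij_inj T1_inj _] [/bij_inj T2_inj T2q].
move=> T1P T2P.
set Ep := passmx.leigenspace P 1; set Em := passmx.leigenspace P (-1).
have Pb := isometry_form bbil P bC Pq.
have sum_pm : (Ep + Em)%VS = fullv := involution_leigenspace_sum P PP.
have sum_mp : (Em + Ep)%VS = fullv by rewrite addvC.
have orth a c u w : a * c = -1 -> u \in passmx.leigenspace P a ->
    w \in passmx.leigenspace P c -> b u w = 0.
  by move=> ac; apply: leigenspace_orthogonal bbil Pb _; rewrite ac; apply/eqP; lra.
have T2_neutral a : neutral_on b (passmx.leigenspace P a).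
  by apply: neutral_on_anti_isometry T2_inj _ T2q => v; apply: commute_leigenspace.
split; split; try exact: T2_neutral.
- exact: leigenspace_neq0 full_neq0 sum_pm T1_inj T1P.
- apply: nondegenerate_on_orthogonal_summand bbil _ _ bnd sum_pm _.
  by move=> u w; apply: orth; lra.
- by apply: leigenspace_neq0 full_neq0 _ T1_inj T1P; rewrite opprK.
- apply: nondegenerate_on_orthogonal_summand bbil _ _ bnd sum_mp _.
  by move=> u w; apply: orth; lra.
Qed.
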